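(* Let $q$ be a power of an odd prime, let $t\in\mathbb{F}_q$ be a nonsquare, and let $d\ge 2$. Let $Q=\{(x,y,tx^2-y^2): x,y\in\mathbb{F}_q\}\subset\mathbb{F}_q^3$ and $R=\{(x,tx^2): x\in\mathbb{F}_q\}\subset\mathbb{F}_q^2$. Define $P_d\subset\mathbb{F}_q^d$ by: $P_d=Q^{d/3}$ (the Cartesian product of $d/3$ copies of $Q$) if $d\equiv0\pmod 3$; $P_d=Q^{(d-1)/3}\times\{0\}$ if $d\equiv1\pmod 3$; $P_d=Q^{(d-2)/3}\times R$ if $d\equiv 2\pmod 3$. Then $|P_d|=q^{\lfloor 2d/3\rfloor}$ and no line in $\mathbb{F}_q^d$ contains more than two points of $P_d$.
   Context: A line in $\mathbb{F}_q^d$ is a set $\{u+rv: r\in\mathbb{F}_q\}$ with $u,v\in\mathbb{F}_q^d$, $v\ne 0$. A nonsquare is an element of $\mathbb{F}_q$ that is not of the form $s^2$ with $s\in\mathbb{F}_q$. *)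

From HB Require Import structures.
From mathcomp Require Import all_boot all_order all_algebra all_field.
Set Implicit Arguments. Unset Strict Implicit. Unset Printing Implicit Defensive.
Import GRing.Theory.
Local Open Scope ring_scope.

(* coordinate n of v (as a nat index), 0 if out of range *)
Definition coordn (F : fieldType) (d : nat) (v : 'rV[F]_d) (n : nat) : F :=
  match @insub nat (fun k => k < d)%N 'I_d n with
  | Some i => v ord0 i
  | None => 0
  end.

(* The set P_d: coordinates split into consecutive blocks of size 3
   (positions 3k,3k+1,3k+2), each a point (x,y,t x^2 - y^2) of Q; if d = 1 mod 3
   the final coordinate is 0; if d = 2 mod 3 the final two coordinates
   form a point (x, t x^2) of R. *)
Definition Pset (F : finFieldType) (t : F) (d : nat) : {set 'rV[F]_d} :=
  [set v : 'rV[F]_d |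
     [forall i : 'I_d, ((i %% 3 == 2)%N) ==>
        (v ord0 i == t * coordn v (i - 2) ^+ 2 - coordn v (i - 1) ^+ 2)]
     && (if (d %% 3 == 1)%N then coordn v d.-1 == 0
         else if (d %% 3 == 2)%N then coordn v d.-1 == t * coordn v d.-2 ^+ 2
         else true)].

(* The line {u + r v : r in F} (v nonzero is imposed in the statement). *)
Definition line (F : finFieldType) (d : nat) (u v : 'rV[F]_d) : {set 'rV[F]_d} :=
  [set u + r *: v | r : F].

From HB Require Import structures.
From mathcomp Require Import all_boot all_order all_algebra all_field.
From mathcomp Require Import zify ring.
Import GRing.Theory.
Local Open Scope ring_scope.
Set Implicit Arguments. Unset Strict Implicit.

(* Along a line u + r v, each defining equation of P_d (z = t x^2 - y^2 on a
   block of Q, z = t x^2 on R, z = 0 on the last coordinate) becomes a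
   polynomial equation of degree at most 2 in r.  Three points on the line
   make it vanish identically; its leading coefficient t b^2 - e^2 can only
   vanish for b = e = 0 since t is a nonsquare, and then the linear
   coefficient forces the third direction coordinate to vanish too.  So three
   collinear points of P_d force v = 0.  For the count, P_d is the graph of a
   map on its free coordinates (x, y in each block of Q, x in R), of which
   there are floor(2d/3). *)

Section Coordinates.
Variables (F : fieldType) (d : nat).

Lemma coordnE (v : 'rV[F]_d) (i : 'I_d) : coordn v i = v ord0 i.
Proof. by rewrite /coordn valK. Qed.

Lemma coordn_default (v : 'rV[F]_d) n : (d <= n)%N -> coordn v n = 0.
Proof. by move=> h; rewrite /coordn insubF //; apply/negbTE; rewrite -leqNgt. Qed.

Lemma coordnDZ (u v : 'rV[F]_d) r n :
  coordn (u + r *: v) n = coordn u n + r * coordn v n.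
Proof. by rewrite /coordn; case: insub => [i|]; rewrite ?mxE ?mulr0 ?addr0. Qed.

Lemma coordn_row (f : nat -> F) n : (n < d)%N -> coordn (\row_(i < d) f i) n = f n.
Proof. by move=> h; rewrite (_ : n = Ordinal h) // coordnE mxE. Qed.

End Coordinates.

Lemma quadratic_coef0_3roots (R : idomainType) (A B C r1 r2 r3 : R) :
  r1 != r2 -> r1 != r3 -> r2 != r3 ->
  A * r1 ^+ 2 + B * r1 + C = 0 -> A * r2 ^+ 2 + B * r2 + C = 0 ->
  A * r3 ^+ 2 + B * r3 + C = 0 -> A = 0 /\ B = 0.
Proof.
move=> n12 n13 n23 e1 e2 e3.
have h12 : (r1 - r2) * (A * (r1 + r2) + B) = 0.
  by rewrite -[RHS](subrr 0) -{1}e1 -e2; ring.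
have h13 : (r1 - r3) * (A * (r1 + r3) + B) = 0.
  by rewrite -[RHS](subrr 0) -{1}e1 -e3; ring.
move/eqP: h12; rewrite mulf_eq0 subr_eq0 (negbTE n12) /= => /eqP h12.
move/eqP: h13; rewrite mulf_eq0 subr_eq0 (negbTE n13) /= => /eqP h13.
have : A * (r2 - r3) = 0 by rewrite -[RHS](subrr 0) -{1}h12 -h13; ring.
move/eqP; rewrite mulf_eq0 subr_eq0 (negbTE n23) orbF => /eqP hA.
by split=> //; move: h12; rewrite hA mul0r add0r.
Qed.

Lemma nonsquare_quadric_line (F : fieldType) (t a b c e f g r1 r2 r3 : F) :
  ~ (exists s : F, t = s ^+ 2) -> r1 != r2 -> r1 != r3 -> r2 != r3 ->
  (forall r, r \in [:: r1; r2; r3] ->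
     f + r * g = t * (a + r * b) ^+ 2 - (c + r * e) ^+ 2) ->
  [/\ b = 0, e = 0 & g = 0].
Proof.
move=> nsq n12 n13 n23 onQ.
have quad_root r : r \in [:: r1; r2; r3] ->
    (t * b ^+ 2 - e ^+ 2) * r ^+ 2 + (2 * t * a * b - 2 * c * e - g) * r
    + (t * a ^+ 2 - c ^+ 2 - f) = 0.
  move=> /onQ onQr.
  transitivity (t * (a + r * b) ^+ 2 - (c + r * e) ^+ 2 - (f + r * g)); first by ring.
  by rewrite onQr subrr.
have [hA hB] : t * b ^+ 2 - e ^+ 2 = 0 /\ 2 * t * a * b - 2 * c * e - g = 0.
  by apply: (quadratic_coef0_3roots n12 n13 n23); apply: quad_root; rewrite !inE eqxx ?orbT.
have b0 : b = 0.
  apply/eqP/negPn/negP => nb; apply: nsq; exists (e / b).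
  move/eqP: hA; rewrite subr_eq0 => /eqP hA.
  by rewrite expr_div_n -hA mulfK // expf_neq0.
move: hA; rewrite b0 expr0n /= mulr0 sub0r => /eqP.
rewrite oppr_eq0 expf_eq0 /= => /eqP e0.
by move: hB; rewrite b0 e0 !mulr0 subr0 sub0r => /eqP; rewrite oppr_eq0 => /eqP.
Qed.

Section PsetEquations.
Variables (F : finFieldType) (t : F) (d : nat) (v : 'rV[F]_d).
Hypothesis Pv : v \in Pset t d.

Lemma Pset_block (k : nat) : (k + 2 < d)%N -> (k %% 3 == 0)%N ->
  coordn v (k + 2) = t * coordn v k ^+ 2 - coordn v (k + 1) ^+ 2.
Proof.
move: Pv; rewrite inE => /andP [/forallP blocks _] hk hm.
have /implyP := blocks (Ordinal hk); rewrite /=.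
have -> : ((k + 2) %% 3 == 2)%N by lia.
move=> /(_ isT)/eqP; rewrite -coordnE.
have -> : (k + 2 - 2 = k)%N by lia.
by have -> : (k + 2 - 1 = k + 1)%N by lia.
Qed.

Lemma Pset_last0 : (d %% 3 == 1)%N -> coordn v d.-1 = 0.
Proof. by move: Pv; rewrite inE => /andP [_]; case: ifP => // _ /eqP. Qed.

Lemma Pset_last_parabola : (d %% 3 == 2)%N -> coordn v d.-1 = t * coordn v d.-2 ^+ 2.
Proof.
move: Pv; rewrite inE => /andP [_]; case: ifP => [/eqP -> //|_].
by case: ifP => // _ /eqP.
Qed.

End PsetEquations.

Lemma Pset_line3_dir0 (F : finFieldType) (t : F) d (u v : 'rV[F]_d) r1 r2 r3 :
  ~ (exists s : F, t = s ^+ 2) -> r1 != r2 -> r1 != r3 -> r2 != r3 ->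
  (forall r, r \in [:: r1; r2; r3] -> u + r *: v \in Pset t d) -> v = 0.
Proof.
move=> nsq n12 n13 n23 onP; apply/rowP => i; rewrite !mxE -coordnE.
have id := ltn_ord i.
have [hk|hk] := ltnP (3 * (i %/ 3) + 2)%N d.
  set k := (3 * (i %/ 3))%N.
  have hm : (k %% 3 == 0)%N by rewrite /k; lia.
  have [b0 e0 g0] : [/\ coordn v k = 0, coordn v (k + 1) = 0 & coordn v (k + 2) = 0].
    apply: (nonsquare_quadric_line (a := coordn u k) (c := coordn u (k + 1))
      (f := coordn u (k + 2)) nsq n12 n13 n23) => r /onP Pr.
    by rewrite -!coordnDZ (Pset_block Pr hk hm).
  have : i = k :> nat \/ i = (k + 1)%N :> nat \/ i = (k + 2)%N :> nat by rewrite /k; lia.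
  by case=> [->|[->|->]].
have : (d %% 3 == 1)%N /\ i = d.-1 :> nat \/
       (d %% 3 == 2)%N /\ (i = d.-2 :> nat \/ i = d.-1 :> nat) by lia.
case=> [[hd ->]|[hd hi]].
  have [_ _ //] : [/\ (0 : F) = 0, (0 : F) = 0 & coordn v d.-1 = 0].
  apply: (nonsquare_quadric_line (a := 0) (c := 0) (f := coordn u d.-1) nsq n12 n13 n23)
    => r /onP Pr.
  by rewrite -!coordnDZ (Pset_last0 Pr hd); ring.
have [b0 _ g0] : [/\ coordn v d.-2 = 0, (0 : F) = 0 & coordn v d.-1 = 0].
  apply: (nonsquare_quadric_line (a := coordn u d.-2) (c := 0) (f := coordn u d.-1)
    nsq n12 n13 n23) => r /onP Pr.
  by rewrite -!coordnDZ (Pset_last_parabola Pr hd); ring.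
by case: hi => ->.
Qed.

Lemma card_line_Pset_le2 (F : finFieldType) (t : F) d (u v : 'rV[F]_d) :
  ~ (exists s : F, t = s ^+ 2) -> v != 0 -> (#|line u v :&: Pset t d| <= 2)%N.
Proof.
move=> nsq nv; rewrite leqNgt; apply/negP.
move=> /card_gt2P [x [y [z [[hx hy hz] [nxy nyz nzx]]]]].
move: hx hy hz; rewrite !in_setI.
move=> /andP [/imsetP [r1 _ e1] P1] /andP [/imsetP [r2 _ e2] P2].
move=> /andP [/imsetP [r3 _ e3] P3]; subst x y z.
have n12 : r1 != r2 by apply: contraNneq nxy => ->.
have n23 : r2 != r3 by apply: contraNneq nyz => ->.
have n13 : r1 != r3 by rewrite eq_sym; apply: contraNneq nzx => ->.
apply/negP: nv; rewrite negbK; apply/eqP.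
apply: (Pset_line3_dir0 (u := u) nsq n12 n13 n23) => r.
by rewrite !in_cons in_nil orbF => /or3P [] /eqP ->.
Qed.

Section PsetParametrization.
Variables (F : finFieldType) (t : F) (d : nat).
Local Notation m := ((2 * d) %/ 3)%N.

(* Free coordinate 2k + j (j < 2) of F^m is coordinate 3k + j of F^d. *)
Definition Pset_param_coord (p : 'rV[F]_m) (i : nat) : F :=
  if (i %% 3 == 2)%N then t * coordn p (2 * (i %/ 3)) ^+ 2 - coordn p (2 * (i %/ 3) + 1) ^+ 2
  else if (i %% 3 == 1)%N && (i.+1 == d) then t * coordn p (2 * (i %/ 3)) ^+ 2
  else coordn p (2 * (i %/ 3) + i %% 3).

Definition Pset_param (p : 'rV[F]_m) : 'rV[F]_d := \row_(i < d) Pset_param_coord p i.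

Definition Pset_coords (v : 'rV[F]_d) : 'rV[F]_m :=
  \row_(j < m) coordn v (3 * (j %/ 2) + j %% 2).

Lemma coordn_Pset_coords v j : (j < m)%N ->
  coordn (Pset_coords v) j = coordn v (3 * (j %/ 2) + j %% 2).
Proof. by move=> hj; rewrite (coordn_row (fun j => coordn v (3 * (j %/ 2) + j %% 2))). Qed.

Lemma Pset_paramK : cancel Pset_param Pset_coords.
Proof.
move=> p; apply/rowP => j; have hj := ltn_ord j.
rewrite mxE coordn_row; last by lia.
rewrite /Pset_param_coord.
have -> : ((3 * (j %/ 2) + j %% 2) %% 3 == 2)%N = false by lia.
have -> : ((3 * (j %/ 2) + j %% 2) %% 3 == 1)%N && ((3 * (j %/ 2) + j %% 2).+1 == d)
    = false.
  by case: (boolP (j %% 2 == 1)%N) => h; [apply/negbTE; rewrite negb_and; apply/orP; right|];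
     lia.
have -> : (2 * ((3 * (j %/ 2) + j %% 2) %/ 3) + (3 * (j %/ 2) + j %% 2) %% 3 = j)%N
  by lia.
by rewrite coordnE.
Qed.

Lemma Pset_param_in p : Pset_param p \in Pset t d.
Proof.
rewrite inE; apply/andP; split.
  apply/forallP => i; apply/implyP => hi; have hd := ltn_ord i.
  rewrite mxE !coordn_row; try lia.
  rewrite /Pset_param_coord hi.
  have -> : ((i - 2) %% 3 == 2)%N = false by lia.
  have -> : ((i - 2) %% 3 == 1)%N = false by lia.
  have -> : ((i - 1) %% 3 == 2)%N = false by lia.
  have -> : ((i - 1) %% 3 == 1)%N && ((i - 1).+1 == d) = false.
    by apply/negbTE; rewrite negb_and; apply/orP; right; lia.
  have -> : (2 * ((i - 2) %/ 3) + (i - 2) %% 3 = 2 * (i %/ 3))%N by lia.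
  by have -> : (2 * ((i - 1) %/ 3) + (i - 1) %% 3 = 2 * (i %/ 3) + 1)%N by lia.
case: ifP => d1.
  rewrite coordn_row /Pset_param_coord; last by lia.
  have -> : (d.-1 %% 3 == 2)%N = false by lia.
  have -> : (d.-1 %% 3 == 1)%N = false by lia.
  by rewrite /= coordn_default //; lia.
case: ifP => d2 //.
rewrite !coordn_row /Pset_param_coord; try lia.
have -> : (d.-1 %% 3 == 2)%N = false by lia.
have -> : (d.-1 %% 3 == 1)%N && (d.-1.+1 == d) = true by apply/andP; split; lia.
have -> : (d.-2 %% 3 == 2)%N = false by lia.
have -> : (d.-2 %% 3 == 1)%N = false by lia.
by have -> : (2 * (d.-2 %/ 3) + d.-2 %% 3 = 2 * (d.-1 %/ 3))%N by lia.
Qed.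

Lemma Pset_coordsK : {in Pset t d, cancel Pset_coords Pset_param}.
Proof.
move=> v Pv; apply/rowP => i; have hd := ltn_ord i.
rewrite mxE /Pset_param_coord; case: ifP => i2.
  rewrite !coordn_Pset_coords; try lia.
  have -> : (3 * (2 * (i %/ 3) %/ 2) + 2 * (i %/ 3) %% 2 = i - 2)%N by lia.
  have -> : (3 * ((2 * (i %/ 3) + 1) %/ 2) + (2 * (i %/ 3) + 1) %% 2 = i - 1)%N by lia.
  by move: Pv; rewrite inE => /andP [/forallP /(_ i) /implyP /(_ i2) /eqP ->].
case: ifP => [/andP [i1 id]|not_last].
  rewrite coordn_Pset_coords; last by lia.
  have -> : (3 * (2 * (i %/ 3) %/ 2) + 2 * (i %/ 3) %% 2 = d.-2)%N by lia.
  rewrite -coordnE; have -> : i = d.-1 :> nat by lia.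
  by rewrite (Pset_last_parabola Pv) //; lia.
have [hm|hm] := ltnP (2 * (i %/ 3) + i %% 3) m.
  rewrite coordn_Pset_coords //.
  have -> : (3 * ((2 * (i %/ 3) + i %% 3) %/ 2) + (2 * (i %/ 3) + i %% 3) %% 2 = i)%N
    by lia.
  by rewrite coordnE.
move/negbT: not_last; rewrite negb_and -coordnE => /orP not_last.
have [d1 di] : (d %% 3 == 1)%N /\ i = d.-1 :> nat by case: not_last; lia.
by rewrite di (Pset_last0 Pv) // coordn_default // -di.
Qed.

Lemma card_Pset : #|Pset t d| = (#|F| ^ m)%N.
Proof.
have -> : Pset t d = Pset_param @: setT.
  apply/setP => v; apply/idP/imsetP => [Pv|[p _ ->]]; last exact: Pset_param_in.
  by exists (Pset_coords v); rewrite ?inE ?Pset_coordsK.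
by rewrite card_imset ?cardsT ?card_mx ?mul1n //; apply: can_inj Pset_paramK.
Qed.

End PsetParametrization.

Theorem mainTheorem13 (F : finFieldType) (t : F) (d : nat) :
  odd #|F| ->
  ~ (exists s : F, t = s ^+ 2) ->
  (2 <= d)%N ->
  #|Pset t d| = (#|F| ^ ((2 * d) %/ 3))%N /\
  (forall u v : 'rV[F]_d, v != 0 -> (#|line u v :&: Pset t d| <= 2)%N).
Proof.
move=> _ nsq _; split; first exact: card_Pset.
by move=> u v; apply: card_line_Pset_le2.
Qed.
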